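(* Let $p_1,\dots,p_r,q_1,\dots,q_s$ be positive integers with $\sum_ip_i=\sum_jq_j$, set $k=r+s$ and $(a_1,\dots,a_k)=(p_1,\dots,p_r,-q_1,\dots,-q_s)$, and $\epsilon=(-1)^{q_1+\cdots+q_s}$. Suppose $\{1,\dots,k\}$ is a disjoint union of nonempty subsets $K_1,\dots,K_l$ such that $\sum_{i\in K_j}a_i=0$ and $\gcd\{a_i:i\in K_j\}=1$ for each $j$. Let $q$ be a prime power, $\lambda\in\mathbb{F}_q^\times$, and let $\mathcal V_\lambda(\mathbb{F}_q^\times)$ be the set of points of $\mathbb{P}^{|K_1|-1}(\mathbb{F}_q)\times\cdots\times\mathbb{P}^{|K_l|-1}(\mathbb{F}_q)$ (the $j$-th factor having homogeneous coordinates $(x_i)_{i\in K_j}$) with all coordinates nonzero satisfying $\sum_{i\in K_j}x_i=0$ for $j=1,\dots,l$ and $\lambda x_1^{a_1}\cdots x_k^{a_k}=\epsilon$. Then $$|\mathcal V_\lambda(\mathbb{F}_q^\times)|=\frac{1}{q-1}\prod_{j=1}^lQ_{|K_j|}(q)+\frac{1}{q^l(q-1)}\sum_{m=1}^{q-2}g(a_1m)\cdots g(a_km)\,\omega(\epsilon\lambda)^m,$$ where $Q_n(x)=\big((x-1)^{n-1}+(-1)^n\big)/x$.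
   Context: Fix a nontrivial additive character $\psi_q$ of $\mathbb{F}_q$, a generator $\omega$ of the character group of $\mathbb{F}_q^\times$, and $g(m)=\sum_{x\in\mathbb{F}_q^\times}\omega(x)^m\psi_q(x)$ for $m\in\mathbb{Z}$. *)

From HB Require Import structures.
From mathcomp Require Import all_boot all_order all_algebra all_field.
Set Implicit Arguments. Unset Strict Implicit. Unset Printing Implicit Defensive.
Import Order.TTheory GRing.Theory Num.Theory.
Local Open Scope ring_scope.

Definition avec (r s : nat) (p : 'I_r -> nat) (qs : 'I_s -> nat) (i : 'I_(r + s)) : int :=
  match split i with inl j => (p j)%:Z | inr j => - (qs j)%:Z end.

Definition is_add_char (F : finFieldType) (psi : F -> algC) : Prop :=
  (forall x y, psi (x + y) = psi x * psi y) /\ (forall x, psi x != 0).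
Definition nontriv_add_char (F : finFieldType) (psi : F -> algC) : Prop :=
  is_add_char psi /\ exists x, psi x != 1.

(* multiplicative character F^x -> C^x (values at 0 irrelevant) *)
Definition is_mult_char (F : finFieldType) (chi : F -> algC) : Prop :=
  (forall x y, x != 0 -> y != 0 -> chi (x * y) = chi x * chi y) /\
  (forall x, x != 0 -> chi x != 0).

Definition generates_char_group (F : finFieldType) (omega : F -> algC) : Prop :=
  is_mult_char omega /\
  forall chi, is_mult_char chi -> exists m : nat, forall x, x != 0 -> chi x = omega x ^+ m.

Definition gauss (F : finFieldType) (omega psi : F -> algC) (m : int) : algC :=
  \sum_(x : F | x != 0) omega x ^ m * psi x.

Definition Qpoly (n : nat) (x : algC) : algC := ((x - 1) ^+ n.-1 + (-1) ^+ n) / x.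

Definition Vsol (F : finFieldType) (k l : nat) (blk : 'I_k -> 'I_l) (a : 'I_k -> int)
  (lam eps : F) : {set {ffun 'I_k -> F}} :=
  [set x : {ffun 'I_k -> F} | [forall i, x i != 0] &&
     [forall j, \sum_(i | blk i == j) x i == 0] &&
     (lam * \prod_i x i ^ a i == eps)].

(* equivalence in P^{|K_1|-1} x ... x P^{|K_l|-1}: blockwise scaling *)
Definition proj_equiv (F : finFieldType) (k l : nat) (blk : 'I_k -> 'I_l)
  (x y : {ffun 'I_k -> F}) : bool :=
  [exists c : {ffun 'I_l -> F}, [forall j, c j != 0] && [forall i, y i == c (blk i) * x i]].

Definition Vpoints (F : finFieldType) (k l : nat) (blk : 'I_k -> 'I_l) (a : 'I_k -> int)
  (lam eps : F) : {set {set {ffun 'I_k -> F}}} :=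
  [set [set y | proj_equiv blk x y] | x in Vsol blk a lam eps].

From HB Require Import structures.
From mathcomp Require Import all_boot all_order all_algebra all_field.
From mathcomp Require Import ring.
Set Implicit Arguments. Unset Strict Implicit. Unset Printing Implicit Defensive.
Import Order.TTheory GRing.Theory Num.Theory.
Local Open Scope ring_scope.

(* Count the affine solutions with nonzero coordinates by orthogonality of
   characters: [lam x^a = eps] is detected by [(q-1)^-1 \sum_m omega(eps lam x^a)^m]
   and each block equation [\sum_(i in K_j) x_i = 0] by [q^-1 \sum_t psi(t \sum x_i)].
   Summing over [x], the count for a fixed [m] factors over the blocks into
   [\sum_u \prod_(i in K_j) G(a_i m, u)] with [G(c, u) = \sum_v omega(v)^c psi(u v)].
   For [m = 0] a block contributes [(q-1)^|K_j| + (q-1)(-1)^|K_j| = (q-1) q Q_|K_j|(q)].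
   For [0 < m < q-1] the term [u = 0] vanishes because the [a_i] of a block are
   coprime, while for [u != 0] we have [G(c, u) = g(c) omega(u)^-c], whose product
   over a block does not depend on [u] since [\sum_(i in K_j) a_i = 0].  Finally the
   torus [(F^x)^l] acts freely by blockwise scaling on the affine solutions, with
   the points of [V_lambda] as orbits. *)

Lemma prim_root_expz_eq1 (R : fieldType) n (w : R) (c : int) :
  n.-primitive_root w -> (w ^ c == 1) = (n%:Z %| c)%Z.
Proof. by move=> prim_w; case: c => k; rewrite dvdzE /= ?invr_eq1 -(prim_order_dvd prim_w). Qed.

Lemma sum_unity_root_expr (R : idomainType) n (w : R) :
  w ^+ n = 1 -> \sum_(m < n) w ^+ m = if w == 1 then n%:R else 0.
Proof.
move=> wn1; have [->|w_neq1] := eqVneq w 1.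
  by rewrite (eq_bigr (fun _ => 1)) => [|m _]; rewrite ?expr1n // sumr_const card_ord.
have := subrX1 w n; rewrite wn1 subrr => /esym/eqP.
by rewrite mulf_eq0 subr_eq0 (negbTE w_neq1) => /eqP.
Qed.

Lemma mulr_fixed_eq0 (R : idomainType) (x w : R) : x * w = x -> w != 1 -> x = 0.
Proof.
move=> /eqP xw w_neq1; apply/eqP; move: xw.
by rewrite -subr_eq0 -{2}[x]mulr1 -mulrBr mulf_eq0 subr_eq0 (negbTE w_neq1) orbF.
Qed.

Lemma prodfz (R : fieldType) (I : Type) (r : seq I) (P : pred I) (f : I -> int) (c : R) :
  c != 0 -> \prod_(i <- r | P i) c ^ f i = c ^ (\sum_(i <- r | P i) f i).
Proof.
by move=> c0; rewrite (big_morph (fun z => c ^ z) (fun m n => expfzDr m n c0) (expr0z c)).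
Qed.

Section FinFieldUnits.
Variable F : finFieldType.
Local Notation n := #|F|.-1.

Lemma card_finField_unit_gt0 : (0 < n)%N.
Proof. by rewrite -ltnS prednK ?finNzRing_gt1 // (ltn_trans _ (finNzRing_gt1 F)). Qed.

Lemma finField_card_pred : #|F| = n.+1.
Proof. by rewrite prednK // (ltn_trans _ (finNzRing_gt1 F)). Qed.

Lemma expf_card_pred (x : F) : x != 0 -> x ^+ n = 1.
Proof.
move=> x0; apply: (mulIf x0); rewrite mul1r -exprSr -finField_card_pred.
exact: expf_card.
Qed.

Lemma finField_prim_root : {g : F | n.-primitive_root g}.
Proof.
have : has n.-primitive_root [seq x <- enum F | x != 0].
  apply: cyclic.has_prim_root; first exact: card_finField_unit_gt0.
  - apply/allP => x; rewrite mem_filter => /andP [x0 _].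
    by rewrite unity_rootE expf_card_pred.
  - by rewrite filter_uniq ?enum_uniq.
  - rewrite -(cardC1 (0:F)) cardE /enum_mem size_filter /= size_filter count_filter.
    by apply: eq_leq; apply: eq_count => x; rewrite !inE andbT.
by case/hasP/sig2_eqW => g _ prim_g; exists g.
Qed.

Lemma finField_prim_root_neq0 (g : F) : n.-primitive_root g -> g != 0.
Proof. by move=> prim_g; rewrite (prim_root_eq0 prim_g) -lt0n card_finField_unit_gt0. Qed.

Definition finField_log (g x : F) : nat :=
  if [pick i : 'I_n | g ^+ i == x] is Some i then val i else 0%N.

Lemma finField_logK g x : n.-primitive_root g -> x != 0 -> g ^+ finField_log g x = x.
Proof.
move=> prim_g x0; rewrite /finField_log; case: pickP => [i /eqP //|].
have [i ->] := prim_rootP prim_g (expf_card_pred x0).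
by move/(_ i); rewrite eqxx.
Qed.

End FinFieldUnits.

Section MultChar.
Variables (F : finFieldType) (chi : F -> algC).
Hypothesis chiP : is_mult_char chi.

Lemma mult_charM x y : x != 0 -> y != 0 -> chi (x * y) = chi x * chi y.
Proof. by case: chiP => chiM _; apply: chiM. Qed.

Lemma mult_char_neq0 x : x != 0 -> chi x != 0.
Proof. by case: chiP => _; apply. Qed.

Lemma mult_char1 : chi 1 = 1.
Proof.
apply: (mulfI (mult_char_neq0 (oner_neq0 F))).
by rewrite -mult_charM ?oner_neq0 // !mulr1.
Qed.

Lemma mult_char_prod (I : Type) (r : seq I) (P : pred I) (f : I -> F) :
  (forall i, P i -> f i != 0) ->
  chi (\prod_(i <- r | P i) f i) = \prod_(i <- r | P i) chi (f i).
Proof.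
move=> f_neq0.
suff [] : \prod_(i <- r | P i) f i != 0 /\
          chi (\prod_(i <- r | P i) f i) = \prod_(i <- r | P i) chi (f i) by [].
apply: (big_rec2 (fun y1 y2 => y1 != 0 /\ chi y1 = y2)).
  by split; [exact: oner_neq0 | exact: mult_char1].
move=> i y1 y2 Pi [y1_neq0 <-]; split; first by rewrite mulf_neq0 ?f_neq0.
by rewrite mult_charM ?f_neq0.
Qed.

Lemma mult_charX x m : x != 0 -> chi (x ^+ m) = chi x ^+ m.
Proof.
move=> x0; elim: m => [|m IHm]; first by rewrite mult_char1.
by rewrite !exprS mult_charM ?expf_neq0 // IHm.
Qed.

Lemma mult_charV x : x != 0 -> chi x^-1 = (chi x)^-1.
Proof.
move=> x0; apply: (mulfI (mult_char_neq0 x0)).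
by rewrite -mult_charM ?invr_eq0 // !divff ?mult_char_neq0 ?mult_char1.
Qed.

Lemma mult_charXz x (c : int) : x != 0 -> chi (x ^ c) = chi x ^ c.
Proof.
by move=> x0; case: c => m /=; rewrite ?mult_charV ?expf_neq0 // mult_charX.
Qed.

Lemma mult_char_unity x : x != 0 -> chi x ^+ #|F|.-1 = 1.
Proof. by move=> x0; rewrite -mult_charX // expf_card_pred // mult_char1. Qed.

End MultChar.

Section GeneratingChar.
Variables (F : finFieldType) (omega : F -> algC).
Hypothesis homega : generates_char_group omega.
Local Notation n := #|F|.-1.

Let omegaP : is_mult_char omega := homega.1.

(* The character [g ^+ i |-> zeta ^+ i], for a primitive root [g] of [F] and
   [zeta] of [algC], is a power of [omega]; so [omega g] has order [n]. *)
Lemma gen_char_prim_root (g : F) : n.-primitive_root g -> n.-primitive_root (omega g).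
Proof.
move=> prim_g; have n_gt0 := card_finField_unit_gt0 F.
have [zeta prim_zeta] := C_prim_root_exists n_gt0.
pose chi x := zeta ^+ finField_log g x.
have chi_expr i : chi (g ^+ i) = zeta ^+ i.
  apply/eqP; rewrite /chi (eq_prim_root_expr prim_zeta) -(eq_prim_root_expr prim_g).
  by rewrite finField_logK // expf_neq0 // finField_prim_root_neq0.
have chiP : is_mult_char chi.
  split=> [x y x0 y0|x _]; last by rewrite expf_neq0 // (prim_root_eq0 prim_zeta) -lt0n.
  by rewrite -{1}(finField_logK prim_g x0) -{1}(finField_logK prim_g y0) -exprD chi_expr exprD.
have [e chiE] := homega.2 chi chiP.
have g0 := finField_prim_root_neq0 prim_g.
have [m prim_m m_dvd_n] := prim_order_exists n_gt0 (mult_char_unity omegaP g0).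
suff <- : m = n by [].
apply/eqP; rewrite eqn_dvd m_dvd_n /= (prim_order_dvd prim_zeta) -[zeta]expr1 -chi_expr.
by rewrite expr1 chiE // -exprM mulnC exprM (prim_expr_order prim_m) expr1n.
Qed.

Lemma gen_char_eq1 y : y != 0 -> (omega y == 1) = (y == 1).
Proof.
move=> y0; have [g prim_g] := finField_prim_root F.
have [i ->] := prim_rootP prim_g (expf_card_pred y0).
have g0 := finField_prim_root_neq0 prim_g.
rewrite (mult_charX omegaP) // -(prim_order_dvd (gen_char_prim_root prim_g)).
exact: prim_order_dvd.
Qed.

Lemma sum_gen_char_expr y : y != 0 ->
  \sum_(m < n) omega y ^+ m = if y == 1 then n%:R else 0.
Proof.
by move=> y0; rewrite sum_unity_root_expr ?gen_char_eq1 ?(mult_char_unity omegaP).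
Qed.

Lemma sum_gen_charXz (c : int) :
  \sum_(x : F | x != 0) omega x ^ c = if (n%:Z %| c)%Z then n%:R else 0.
Proof.
have [g prim_g] := finField_prim_root F.
have g0 := finField_prim_root_neq0 prim_g.
have [/dvdzP [d ->]|n_ndvd_c] := ifPn.
  rewrite (eq_bigr (fun _ => 1)) => [|x x0]; first by rewrite sumr_const -(cardC1 0).
  by rewrite mulrC -exprz_exp (mult_char_unity omegaP x0 : omega x ^ n%:Z = 1) exp1rz.
apply: (mulr_fixed_eq0 (w := omega g ^ c)); last first.
  by rewrite (prim_root_expz_eq1 _ (gen_char_prim_root prim_g)).
rewrite mulr_suml (eq_bigr (fun x => omega (x * g) ^ c)) => [|x x0]; last first.
  by rewrite (mult_charM omegaP) // expfzMl.
rewrite (eq_bigl (fun x => x * g != 0)) => [|x]; last by rewrite mulf_eq0 (negbTE g0) orbF.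
by rewrite -(reindex_inj (mulIf g0) (P := fun x => x != 0) (F := fun x => omega x ^ c)).
Qed.

End GeneratingChar.

Section AddChar.
Variables (F : finFieldType) (psi : F -> algC).
Hypothesis psiP : is_add_char psi.

Lemma add_charD x y : psi (x + y) = psi x * psi y.
Proof. by case: psiP. Qed.

Lemma add_char_neq0 x : psi x != 0.
Proof. by case: psiP. Qed.

Lemma add_char0 : psi 0 = 1.
Proof. by apply: (mulfI (add_char_neq0 0)); rewrite -add_charD !addr0 mulr1. Qed.

Lemma add_char_sum (I : Type) (r : seq I) (P : pred I) (f : I -> F) :
  psi (\sum_(i <- r | P i) f i) = \prod_(i <- r | P i) psi (f i).
Proof. exact: (big_morph psi add_charD add_char0). Qed.

End AddChar.

Section NontrivialAddChar.
Variables (F : finFieldType) (psi : F -> algC).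
Hypothesis hpsi : nontriv_add_char psi.

Lemma sum_nontriv_add_char : \sum_t psi t = 0.
Proof.
have [psiP [x0 psi_x0_neq1]] := hpsi.
apply: (mulr_fixed_eq0 _ psi_x0_neq1).
rewrite mulr_suml (eq_bigr (fun t => psi (t + x0))) => [|t _]; last by rewrite add_charD.
by rewrite -(reindex_inj (addIr x0) (P := xpredT) (F := psi)).
Qed.

Lemma sum_nontriv_add_char_mul u : \sum_t psi (t * u) = if u == 0 then #|F|%:R else 0.
Proof.
have [->|u0] := eqVneq u 0.
  by rewrite (eq_bigr (fun _ => 1)) => [|t _]; rewrite ?mulr0 ?(add_char0 hpsi.1) // sumr_const.
by rewrite -(reindex_inj (mulIf u0) (P := xpredT) (F := psi)) sum_nontriv_add_char.
Qed.

End NontrivialAddChar.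

Section GaussSumAt.
Variables (F : finFieldType) (psi omega : F -> algC).
Hypothesis hpsi : nontriv_add_char psi.
Hypothesis homega : generates_char_group omega.
Local Notation n := #|F|.-1.
Let omegaP : is_mult_char omega := homega.1.

Definition gauss_at (c : int) (u : F) : algC :=
  \sum_(v : F | v != 0) omega v ^ c * psi (u * v).

Lemma gauss_at_0 c : gauss_at c 0 = if (n%:Z %| c)%Z then n%:R else 0.
Proof.
rewrite /gauss_at -(sum_gen_charXz homega); apply: eq_bigr => v _.
by rewrite mul0r (add_char0 hpsi.1) mulr1.
Qed.

Lemma gauss_at_expz0 u : gauss_at 0 u = (if u == 0 then #|F|%:R else 0) - 1.
Proof.
rewrite /gauss_at -(sum_nontriv_add_char_mul hpsi) [in RHS](bigD1 0) //=.
rewrite mul0r (add_char0 hpsi.1) addrC addrK.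
by apply: eq_bigr => v _; rewrite expr0z mul1r mulrC.
Qed.

Lemma gauss_atE c u : u != 0 -> gauss_at c u = gauss omega psi c * omega u ^ (- c).
Proof.
move=> u0; have omega_u0 := mult_char_neq0 omegaP u0.
rewrite -invr_expz; apply: (mulIf (expfz_neq0 c omega_u0)).
rewrite mulfVK ?expfz_neq0 // /gauss_at /gauss mulr_suml.
rewrite [RHS](reindex_inj (mulfI u0) (P := fun w => w != 0)).
rewrite [RHS](eq_bigl (fun v => v != 0)) => [|v]; last by rewrite mulf_eq0 (negbTE u0).
apply: eq_bigr => v v0; rewrite (mult_charM omegaP) // expfzMl.
by rewrite mulrAC [omega u ^ c * _]mulrC.
Qed.

End GaussSumAt.

Section ProjectiveClasses.
Variables (F : finFieldType) (k l : nat) (blk : 'I_k -> 'I_l) (a : 'I_k -> int) (lam eps : F).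
Hypothesis blk_surj : forall j : 'I_l, exists i, blk i = j.
Hypothesis blk_sum_a : forall j : 'I_l, \sum_(i | blk i == j) a i = 0.

Local Notation equiv := (@proj_equiv F k l blk).
Local Notation D := (Vsol blk a lam eps).

Lemma proj_equivP (x y : {ffun 'I_k -> F}) :
  reflect (exists2 c : {ffun 'I_l -> F}, (forall j, c j != 0) & y = [ffun i => c (blk i) * x i])
          (equiv x y).
Proof.
apply: (iffP existsP) => [[c /andP [/forallP c0 /forallP e]]|[c c0 ->]].
  by exists c => //; apply/ffunP => i; rewrite ffunE; apply/eqP.
by exists c; apply/andP; split; apply/forallP => // i; rewrite ffunE.
Qed.

Lemma proj_equiv_refl x : equiv x x.
Proof.
apply/proj_equivP; exists [ffun=> 1] => [j|]; first by rewrite ffunE oner_neq0.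
by apply/ffunP => i; rewrite !ffunE mul1r.
Qed.

Lemma proj_equiv_sym x y : equiv x y -> equiv y x.
Proof.
move/proj_equivP => [c c0 ->]; apply/proj_equivP; exists [ffun j => (c j)^-1] => [j|].
  by rewrite ffunE invr_eq0.
by apply/ffunP => i; rewrite !ffunE mulrA mulVf ?mul1r.
Qed.

Lemma proj_equiv_trans x y z : equiv x y -> equiv y z -> equiv x z.
Proof.
move/proj_equivP => [c c0 ->] /proj_equivP [d d0 ->]; apply/proj_equivP.
exists [ffun j => d j * c j] => [j|]; first by rewrite ffunE mulf_neq0.
by apply/ffunP => i; rewrite !ffunE mulrA.
Qed.

Lemma proj_equiv_equivalence : equivalence_rel equiv.
Proof.
move=> x y z; split; first exact: proj_equiv_refl.
move=> xy; apply/idP/idP => [xz|yz]; last exact: proj_equiv_trans xy yz.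
exact: proj_equiv_trans (proj_equiv_sym xy) xz.
Qed.

(* Blockwise scaling multiplies the monomial by [\prod_j c_j ^ (\sum_(i in K_j) a_i) = 1]. *)
Lemma Vsol_proj_equiv x y : x \in D -> equiv x y -> y \in D.
Proof.
rewrite !inE => /andP [/andP [/forallP x0 /forallP x_blk] x_mono] /proj_equivP [c c0 ->].
apply/andP; split; first (apply/andP; split).
- by apply/forallP => i; rewrite ffunE mulf_neq0.
- apply/forallP => j; rewrite (eq_bigr (fun i => c j * x i)) => [|i /eqP <-]; last by rewrite ffunE.
  by rewrite -mulr_sumr (eqP (x_blk j)) mulr0.
- rewrite (eq_bigr (fun i => c (blk i) ^ a i * x i ^ a i)) => [|i _]; last by rewrite ffunE expfzMl.
  rewrite big_split /= mulrA [lam * _]mulrC -mulrA (partition_big blk xpredT) //=.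
  rewrite (eq_bigr (fun j => 1)) ?big1_eq ?mul1r // => j _.
  rewrite (eq_bigr (fun i => c j ^ a i)) => [|i /eqP <-] //.
  by rewrite prodfz // blk_sum_a expr0z.
Qed.

Lemma card_proj_class x : x \in D -> #|[set y | equiv x y]| = (#|F|.-1 ^ l)%N.
Proof.
rewrite inE => /andP [/andP [/forallP x0 _] _].
pose units := [set c : {ffun 'I_l -> F} | [forall j, c j != 0]].
pose scale (c : {ffun 'I_l -> F}) := [ffun i => c (blk i) * x i].
have -> : [set y | equiv x y] = scale @: units.
  apply/setP => y; rewrite inE; apply/proj_equivP/imsetP => [[c c0 ->]|[c]].
    by exists c => //; rewrite inE; apply/forallP.
  by rewrite inE => /forallP c0 ->; exists c.
rewrite card_in_imset => [|c d _ _ scale_cd].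
  rewrite -(cardC1 (0:F)) -[in RHS](card_ord l) -card_ffun_on.
  apply: eq_card => c; rewrite inE; apply/forallP/ffun_onP => c0 j.
    by rewrite !inE c0.
  by have := c0 j; rewrite !inE.
apply/ffunP => j; have [i <-] := blk_surj j.
have := congr1 (fun y : {ffun 'I_k -> F} => y i) scale_cd.
by rewrite /scale !ffunE => /(mulIf (x0 i)).
Qed.

Lemma card_Vsol : #|D| = (#|Vpoints blk a lam eps| * #|F|.-1 ^ l)%N.
Proof.
have Vpoints_partition : Vpoints blk a lam eps = equivalence_partition equiv D.
  apply: eq_in_imset => x xD; apply/setP => y; rewrite !inE.
  by case xy: (equiv x y); rewrite ?andbF //; have := Vsol_proj_equiv xD xy; rewrite inE => ->.
apply: card_uniform_partition => [A /imsetP [x xD ->]|]; first exact: card_proj_class.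
rewrite Vpoints_partition; apply: equivalence_partitionP => x y z _ _ _.
exact: proj_equiv_equivalence.
Qed.

End ProjectiveClasses.

Lemma sum_ffun_prod_blocks (R : comPzRingType) (T : finType) k l (blk : 'I_k -> 'I_l)
    (f : 'I_k -> T -> R) :
  \sum_(t : {ffun 'I_l -> T}) \prod_i f i (t (blk i)) =
  \prod_j \sum_u \prod_(i | blk i == j) f i u.
Proof.
rewrite bigA_distr_bigA; apply: eq_bigr => t _.
rewrite (partition_big blk xpredT) //; apply: eq_bigr => j _.
by apply: eq_bigr => i /eqP ->.
Qed.

Lemma prod_if_const (R : comPzRingType) l (b : 'I_l -> bool) (c : R) :
  \prod_j (if b j then c else 0) = if [forall j, b j] then c ^+ l else 0.
Proof.
case: forallP => [b_all|/forallP]; last first.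
  by rewrite negb_forall => /existsP [j /negbTE bj]; rewrite (bigD1 j) //= bj mul0r.
by rewrite (eq_bigr (fun _ => c)) ?prodr_const ?card_ord // => j _; rewrite b_all.
Qed.

Section CountingPoints.
Variables (F : finFieldType) (psi omega : F -> algC).
Hypothesis hpsi : nontriv_add_char psi.
Hypothesis homega : generates_char_group omega.
Variables (k l : nat) (blk : 'I_k -> 'I_l) (a : 'I_k -> int) (lam eps : F).
Hypothesis blk_surj : forall j : 'I_l, exists i, blk i = j.
Hypothesis blk_sum_a : forall j : 'I_l, \sum_(i | blk i == j) a i = 0.
Hypothesis blk_gcd_a : forall j : 'I_l, \big[gcdn/0%N]_(i | blk i == j) `|a i|%N = 1%N.
Hypothesis lam_neq0 : lam != 0.
Hypothesis eps_sqr : eps ^+ 2 = 1.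

Local Notation n := #|F|.-1.
Local Notation D := (Vsol blk a lam eps).
Local Notation q := (#|F|%:R : algC).
Let omegaP : is_mult_char omega := homega.1.

Lemma eps_neq0 : eps != 0.
Proof. by apply: contra_eq_neq eps_sqr => ->; rewrite expr0n eq_sym oner_neq0. Qed.

Lemma q1_neq0 : (n%:R : algC) != 0.
Proof. by rewrite pnatr_eq0 -lt0n card_finField_unit_gt0. Qed.

Lemma q_neq0 : q != 0.
Proof. by rewrite pnatr_eq0 finField_card_pred. Qed.

Lemma q_sub1 : q - 1 = n%:R.
Proof. by rewrite [in LHS]finField_card_pred mulrS addrC addrK. Qed.

Lemma monomial_indicator (x : {ffun 'I_k -> F}) : (forall i, x i != 0) ->
  \sum_(m < n) omega (eps * lam) ^+ m * \prod_i omega (x i) ^ (a i * m%:Z) =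
  if lam * \prod_i x i ^ a i == eps then n%:R else 0.
Proof.
move=> x0; have xa0 : \prod_i x i ^ a i != 0.
  by apply/prodf_neq0 => i _; rewrite expfz_neq0.
have y0 : eps * (lam * \prod_i x i ^ a i) != 0 by rewrite !mulf_neq0 ?eps_neq0.
have -> : (lam * \prod_i x i ^ a i == eps) = (eps * (lam * \prod_i x i ^ a i) == 1).
  by rewrite -(inj_eq (mulfI eps_neq0)) -expr2 eps_sqr.
rewrite -(sum_gen_char_expr homega y0); apply: eq_bigr => m _.
rewrite mulrA [in RHS](mult_charM omegaP) ?mulf_neq0 ?eps_neq0 // [in RHS]exprMn.
congr (_ * _); rewrite (mult_char_prod omegaP) => [|i _]; last by rewrite expfz_neq0.
rewrite -prodrXl; apply: eq_bigr => i _.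
by rewrite (mult_charXz omegaP) // -(exprz_exp _ _ (Posz m)).
Qed.

Lemma block_sums_indicator (x : {ffun 'I_k -> F}) :
  \sum_(t : {ffun 'I_l -> F}) \prod_i psi (t (blk i) * x i) =
  if [forall j, \sum_(i | blk i == j) x i == 0] then q ^+ l else 0.
Proof.
rewrite (sum_ffun_prod_blocks blk (fun i u => psi (u * x i))) -prod_if_const.
apply: eq_bigr => j _; rewrite -(sum_nontriv_add_char_mul hpsi).
by apply: eq_bigr => u _; rewrite mulr_sumr (add_char_sum hpsi.1).
Qed.

Definition gauss_term (m : nat) (t : {ffun 'I_l -> F}) (i : 'I_k) (v : F) : algC :=
  if v != 0 then omega v ^ (a i * m%:Z) * psi (t (blk i) * v) else 0.

Lemma Vsol_indicator x : (x \in D)%:R = (n%:R * q ^+ l)^-1 *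
  \sum_(m < n) \sum_(t : {ffun 'I_l -> F})
    omega (eps * lam) ^+ m * \prod_i gauss_term m t i (x i).
Proof.
have [/forallP x0|] := boolP [forall i, x i != 0]; last first.
  move=> x_has0; have -> : x \in D = false by rewrite inE (negbTE x_has0).
  move: x_has0; rewrite negb_forall => /existsP [i0]; rewrite negbK => xi0.
  rewrite big1 ?mulr0 // => m _; rewrite big1 // => t _.
  by rewrite (bigD1 i0) //= /gauss_term xi0 mul0r mulr0.
under eq_bigr => m _.
  rewrite (eq_bigr (fun t : {ffun _} =>
      (omega (eps * lam) ^+ m * \prod_i omega (x i) ^ (a i * m%:Z)) *
      \prod_i psi (t (blk i) * x i))) => [|t _]; last first.
    rewrite -mulrA -big_split /=; congr (_ * _).
    by apply: eq_bigr => i _; rewrite /gauss_term x0.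
  rewrite -mulr_sumr block_sums_indicator.
  over.
rewrite -mulr_suml monomial_indicator // inE (introT forallP x0) /=.
case: ifP => _; case: ifP => _; rewrite ?(mulr0, mul0r) //.
by rewrite mulVf // mulf_neq0 ?expf_neq0 ?q1_neq0 ?q_neq0.
Qed.

Lemma card_Vsol_gauss : (#|D|)%:R = (n%:R * q ^+ l)^-1 *
  \sum_(m < n) omega (eps * lam) ^+ m *
    \prod_j \sum_u \prod_(i | blk i == j) gauss_at psi omega (a i * m%:Z) u.
Proof.
have -> : (#|D|)%:R = \sum_x (x \in D)%:R :> algC.
  by rewrite -sum1_card natr_sum big_mkcond /=; apply: eq_bigr => x _; case: (x \in D).
under eq_bigr do rewrite Vsol_indicator.
rewrite -mulr_sumr exchange_big; congr (_ * _); apply: eq_bigr => m _.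
rewrite exchange_big /= -(sum_ffun_prod_blocks blk (fun i => gauss_at psi omega (a i * m%:Z))).
rewrite mulr_sumr; apply: eq_bigr => t _; rewrite -mulr_sumr; congr (_ * _).
rewrite -bigA_distr_bigA; apply: eq_bigr => i _.
by rewrite /gauss_term /gauss_at [RHS]big_mkcond.
Qed.

Lemma card_block j : (0 < #|[set i | blk i == j]|)%N.
Proof. by have [i bi] := blk_surj j; apply/card_gt0P; exists i; rewrite inE bi. Qed.

Lemma block_gauss_sum_expz0 j :
  \sum_u \prod_(i | blk i == j) gauss_at psi omega 0 u =
  n%:R ^+ #|[set i | blk i == j]| + n%:R * (-1) ^+ #|[set i | blk i == j]|.
Proof.
have prod_const (c : algC) : \prod_(i | blk i == j) c = c ^+ #|[set i | blk i == j]|.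
  by rewrite -prodr_const; apply: eq_bigl => i; rewrite inE.
under eq_bigr do rewrite prod_const (gauss_at_expz0 omega hpsi).
rewrite (bigD1 0) //= eqxx q_sub1; congr (_ + _).
under eq_bigr => u /negbTE -> do rewrite sub0r.
by rewrite sumr_const -(cardC1 0) mulr_natl.
Qed.

(* Otherwise [n] would divide [m] times the gcd of the exponents of the block, which is [1]. *)
Lemma block_exponent_ndvd j (m : nat) : (0 < m < n)%N ->
  exists2 i, blk i == j & ~~ (n%:Z %| a i * m%:Z)%Z.
Proof.
case/andP => m_gt0 m_lt_n; apply/exists_inP; apply: contraTT m_lt_n.
rewrite negb_exists_in => /forall_inP n_dvd_am; rewrite -leqNgt.
suff : (n %| \big[gcdn/0%N]_(i | blk i == j) `|a i|%N * m)%N.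
  by rewrite blk_gcd_a mul1n => /dvdn_leq; apply.
apply: (big_ind (fun g => n %| g * m)%N) => [|g1 g2 dvd1 dvd2|i bi].
- by rewrite mul0n dvdn0.
- by rewrite muln_gcdl dvdn_gcd dvd1 dvd2.
- by have := n_dvd_am i bi; rewrite negbK dvdzE abszM.
Qed.

Lemma block_gauss_sum j (m : nat) : (0 < m < n)%N ->
  \sum_u \prod_(i | blk i == j) gauss_at psi omega (a i * m%:Z) u =
  n%:R * \prod_(i | blk i == j) gauss omega psi (a i * m%:Z).
Proof.
move=> m_range; rewrite (bigD1 0) //=.
have [i bi ndvd] := block_exponent_ndvd j m_range.
rewrite (bigD1 i) //= (gauss_at_0 hpsi homega) (negbTE ndvd) mul0r add0r.
rewrite (eq_bigr (fun _ => \prod_(i | blk i == j) gauss omega psi (a i * m%:Z))) => [|u u0].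
  by rewrite sumr_const -(cardC1 0) mulr_natl.
under eq_bigr do rewrite (gauss_atE psi homega _ u0).
rewrite big_split /= prodfz ?(mult_char_neq0 omegaP) //.
by rewrite sumrN -mulr_suml blk_sum_a mul0r oppr0 expr0z mulr1.
Qed.

Lemma prod_block_gauss_sum_expz0 :
  \prod_j \sum_u \prod_(i | blk i == j) gauss_at psi omega (a i * 0%:Z) u =
  (n%:R * q) ^+ l * \prod_(j < l) Qpoly #|[set i | blk i == j]| q.
Proof.
rewrite -[l in _ ^+ l]card_ord -prodr_const -big_split /=; apply: eq_bigr => j _.
under eq_bigr do under eq_bigr do rewrite mulr0.
rewrite block_gauss_sum_expz0 /Qpoly q_sub1.
case: #|[set i | blk i == j]| (card_block j) => // nj _ /=.
by rewrite exprS; field; apply: q_neq0.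
Qed.

Lemma prod_block_gauss_sum (m : nat) : (0 < m < n)%N ->
  \prod_j \sum_u \prod_(i | blk i == j) gauss_at psi omega (a i * m%:Z) u =
  n%:R ^+ l * \prod_(i < k) gauss omega psi (a i * m%:Z).
Proof.
move=> m_range; rewrite -[l in _ ^+ l]card_ord -prodr_const (partition_big blk xpredT) //=.
by rewrite -big_split /=; apply: eq_bigr => j _; rewrite block_gauss_sum.
Qed.

Lemma card_Vpoints : (#|Vpoints blk a lam eps|)%:R =
  (\prod_(j < l) Qpoly #|[set i | blk i == j]| q) / (q - 1)
  + (\sum_(1 <= m < #|F|.-2.+1)
       (\prod_(i < k) gauss omega psi (a i * m%:Z)) * omega (eps * lam) ^+ m)
    / (q ^+ l * (q - 1)).
Proof.
have nl_neq0 : (n%:R : algC) ^+ l != 0 by rewrite expf_neq0 ?q1_neq0.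
have -> : (#|Vpoints blk a lam eps|)%:R = (#|D|)%:R / n%:R ^+ l :> algC.
  by rewrite (card_Vsol _ _ blk_surj blk_sum_a) natrM natrX mulfK.
have -> : #|F|.-2.+1 = n by rewrite finField_card_pred prednK ?card_finField_unit_gt0.
pose f m := omega (eps * lam) ^+ m *
  \prod_j \sum_u \prod_(i | blk i == j) gauss_at psi omega (a i * m%:Z) u.
rewrite card_Vsol_gauss -(big_mkord xpredT f) (big_ltn (card_finField_unit_gt0 F)) /f /=.
rewrite expr0 mul1r prod_block_gauss_sum_expz0 q_sub1.
under eq_big_nat => m m_range do rewrite prod_block_gauss_sum // mulrC -mulrA.
rewrite -mulr_sumr exprMn.
by field; rewrite q1_neq0 nl_neq0 expf_neq0 ?q_neq0.
Qed.

End CountingPoints.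

Theorem mainTheorem17 (F : finFieldType) (psi omega : F -> algC)
  (hpsi : nontriv_add_char psi) (homega : generates_char_group omega)
  (r s : nat) (p : 'I_r -> nat) (qs : 'I_s -> nat)
  (hp : forall i, (0 < p i)%N) (hq : forall j, (0 < qs j)%N)
  (hsum : (\sum_i p i)%N = (\sum_j qs j)%N)
  (l : nat) (blk : 'I_(r + s) -> 'I_l)
  (hne : forall j : 'I_l, exists i, blk i = j)
  (hz : forall j : 'I_l, \sum_(i | blk i == j) avec p qs i = 0)
  (hg : forall j : 'I_l, \big[gcdn/0%N]_(i | blk i == j) `|avec p qs i|%N = 1%N)
  (lam : F) (hlam : lam != 0) :
  let eps : F := (-1) ^+ (\sum_j qs j)%N in
  let qC : algC := (#|F|)%:R in
  (#|Vpoints blk (avec p qs) lam eps|)%:R =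
    (\prod_(j < l) Qpoly #|[set i | blk i == j]| qC) / (qC - 1)
    + (\sum_(1 <= m < #|F|.-2.+1)
         (\prod_(i < r + s) gauss omega psi (avec p qs i * m%:Z)) * omega (eps * lam) ^+ m)
      / (qC ^+ l * (qC - 1)).
Proof.
move=> eps qC; apply: card_Vpoints => //.
by rewrite /eps -exprM mulnC exprM sqrrN expr1n expr1n.
Qed.
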